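(* Consider the evolution equation $\dot u=Au+Bu$ and methods (approximations $\Phi(h)$ of $e^{h(A+B)}$, with products read from left to right). (i) (Family I.) Let $\Phi^{[1]}(h)$ be a first-order method and define recursively, for $q=1,2,\dots$, $$\Phi^{[q+1]}(h)=\prod_{i=1}^{m_q}\Phi^{[q]}(\alpha_{q,i}h),$$ where for each $q$ the complex numbers $\alpha_{q,1},\dots,\alpha_{q,m_q}$ are all nonzero and satisfy $\sum_{i=1}^{m_q}\alpha_{q,i}=1$ and $\sum_{i=1}^{m_q}\alpha_{q,i}^{q+1}=0$ (so that $\Phi^{[q+1]}$ has order $q+1$). Then $\Phi^{[p+1]}(h)$ can be written as $$\Phi^{[p+1]}(h)=\prod_{i_p=1}^{m_p}\Big(\prod_{i_{p-1}=1}^{m_{p-1}}\Big(\cdots\Big(\prod_{i_1=1}^{m_1}\Phi^{[1]}(\alpha_{p,i_p}\alpha_{p-1,i_{p-1}}\cdots\alpha_{1,i_1}h)\Big)\cdots\Big)\Big),$$ and its coefficients are the products $\prod_{j=1}^p\alpha_{j,i_j}$, $1\le i_1\le m_1,\dots,1\le i_p\le m_p$. For every $p\geq 3$, every such method $\Phi^{[p+1]}(h)$ of order $p+1$ has at least one coefficient with negative real part. (ii) (Family II.) Let $\tilde\Phi^{[2]}(h)$ be a symmetric second-order method and define recursively, for $q=1,2,\dots$, the symmetric compositions $$\tilde\Phi^{[2q+2]}(h)=\prod_{i=1}^{m_q}\tilde\Phi^{[2q]}(\alpha_{q,i}h),$$ where for each $q$ the complex numbers $\alpha_{q,1},\dots,\alpha_{q,m_q}$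 are nonzero, satisfy $\alpha_{q,m_q+1-i}=\alpha_{q,i}$ for all $i$, $\sum_{i=1}^{m_q}\alpha_{q,i}=1$ and $\sum_{i=1}^{m_q}\alpha_{q,i}^{2q+1}=0$ (so that $\tilde\Phi^{[2q+2]}$ is symmetric of order $2q+2$). The coefficients of $\tilde\Phi^{[2p+2]}(h)$ are the products $\prod_{j=1}^p\alpha_{j,i_j}$, $1\le i_j\le m_j$, by which $h$ is multiplied in the corresponding expanded composition of $\tilde\Phi^{[2]}$. For every $p\geq 7$, every such method $\tilde\Phi^{[2p+2]}(h)$ of order $2p+2$ has at least one coefficient with negative real part.
   Context: A method $\Phi(h)$ is of order $p$ if $\Phi(h)-e^{h(A+B)}=\mathcal{O}(h^{p+1})$ as a formal expansion in $h$ for arbitrary non-commuting operators $A,B$. A method is symmetric if $\Phi(h)\Phi(-h)=\mathrm{Id}$. *)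

From HB Require Import structures.
From mathcomp Require Import all_boot all_order all_algebra.
From mathcomp Require Import complex.
From mathcomp Require Import reals.
Set Implicit Arguments. Unset Strict Implicit. Unset Printing Implicit Defensive.
Import Order.TTheory GRing.Theory Num.Theory.
Local Open Scope ring_scope.

(* Composition coefficients of level q: alpha q i, 0 <= i < m q (0-indexed). *)

Definition famI_cond (C : numClosedFieldType) (m : nat -> nat)
  (alpha : nat -> nat -> C) (q : nat) : Prop :=
  [/\ (forall i, (i < m q)%N -> alpha q i != 0),
      \sum_(i < m q) alpha q i = 1
    & \sum_(i < m q) alpha q i ^+ q.+1 = 0].

Definition famII_cond (C : numClosedFieldType) (m : nat -> nat)
  (alpha : nat -> nat -> C) (q : nat) : Prop :=
  [/\ (forall i, (i < m q)%N -> alpha q i != 0),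
      (forall i, (i < m q)%N -> alpha q (m q - 1 - i)%N = alpha q i),
      \sum_(i < m q) alpha q i = 1
    & \sum_(i < m q) alpha q i ^+ (2 * q).+1 = 0].

Definition is_coeff (C : numClosedFieldType) (m : nat -> nat)
  (alpha : nat -> nat -> C) (p : nat) (c : C) : Prop :=
  exists idx : nat -> nat,
    (forall j, (1 <= j <= p)%N -> (idx j < m j)%N) /\
    c = \prod_(1 <= j < p.+1) alpha j (idx j).

From HB Require Import structures.
From mathcomp Require Import all_boot all_order all_algebra.
From mathcomp Require Import complex.
From mathcomp Require Import reals.
From mathcomp Require Import boolp trigo.
From mathcomp Require Import ring lra.
Import Order.TTheory GRing.Theory Num.Theory.
Local Open Scope ring_scope.
Local Open Scope complex_scope.

(* Write the coefficients of level j in polar form. As they are nonzero and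
   their n_j-th powers sum to 0 (n_j = j + 1, resp. 2j + 1), their arguments do
   not fit in an arc of length pi / n_j. Hence either the level is real with
   coefficients of both signs, or two of its coefficients have a ratio
   s e^{i d_j} with s > 0 and pi / n_j <= d_j < pi. In the first case, changing
   the choice at that level flips the sign of the real part of any coefficient
   with nonzero real part. Otherwise, switching the levels one after the other
   from the first to the second member of their pair rotates the product by
   d_1, d_2, ..., whose total exceeds pi * sum_j 1 / n_j > pi; starting from a
   product in the closed right half-plane, one of the intermediate products
   lies in the open left half-plane. *)

Local Notation Re := (@complex.Re _).
Local Notation Im := (@complex.Im _).
Local Notation normc := Normc.normc.

Lemma sumr_ord_gt0 (R : numDomainType) m (F : 'I_m -> R) :
  (0 < m)%N -> (forall i, 0 < F i) -> 0 < \sum_i F i.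
Proof.
case: m F => // m F _ F_gt0; rewrite big_ord_recl; apply: ltr_pwDl => //.
by apply: sumr_ge0 => i _; apply/ltW.
Qed.

Lemma harmonic_gt1_mono (R : realFieldType) (n : nat -> nat) p0 p : (p0 <= p)%N ->
  1 < \sum_(1 <= j < p0.+1) (n j)%:R^-1 :> R -> 1 < \sum_(1 <= j < p.+1) (n j)%:R^-1 :> R.
Proof.
move=> le_p0p /lt_le_trans; apply.
rewrite [leRHS](big_cat_nat (n := p0.+1)) //= lerDl.
by apply: sumr_ge0 => j _; rewrite invr_ge0.
Qed.

Section NegativeCoefficients.
Variable R : realType.
Implicit Types (z : R[i]) (r t : R).

Lemma ReM z (w : R[i]) : Re (z * w) = Re z * Re w - Im z * Im w.
Proof. by case: z w => [a b] [c d]. Qed.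

Lemma ImM z (w : R[i]) : Im (z * w) = Re z * Im w + Im z * Re w.
Proof. by case: z w => [a b] [c d]. Qed.

Lemma Re_rM r z : Re (r%:C * z) = r * Re z.
Proof. by rewrite ReM /= mul0r subr0. Qed.

Lemma Im_rM r z : Im (r%:C * z) = r * Im z.
Proof. by rewrite ImM /= mul0r addr0. Qed.

Lemma Re_sum (I : Type) (s : seq I) (P : pred I) (F : I -> R[i]) :
  Re (\sum_(i <- s | P i) F i) = \sum_(i <- s | P i) Re (F i).
Proof. by elim/big_rec2: _ => // i x y _ <-; case: (F i) y => [? ?] []. Qed.

Lemma real_Im0 {z} : Im z = 0 -> z = (Re z)%:C.
Proof. by case: z => a b /= ->. Qed.

Lemma Im_prod_real (I : eqType) (s : seq I) (F : I -> R[i]) :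
  (forall i, i \in s -> Im (F i) = 0) -> Im (\prod_(i <- s) F i) = 0.
Proof.
move=> F_real; rewrite big_seq; elim/big_ind: _ => // x y x0 y0.
by rewrite ImM x0 y0 !mulr0 mul0r addr0.
Qed.

Definition expi t : R[i] := cos t +i* sin t.

Lemma expiD t1 t2 : expi (t1 + t2) = expi t1 * expi t2.
Proof. by rewrite /expi cosD sinD [sin t1 * _ + _]addrC. Qed.

Lemma expi0 : expi 0 = 1.
Proof. by rewrite /expi cos0 sin0. Qed.

Lemma expi_neq0 t : expi t != 0.
Proof.
apply/negP => /eqP e; move: (expiD t (- t)).
by rewrite e mul0r subrr expi0 => /eqP; rewrite oner_eq0.
Qed.

Lemma expiB t1 t2 : expi (t1 - t2) = expi t1 / expi t2.
Proof. by rewrite -[in RHS](subrK t2 t1) [in RHS]expiD mulfK ?expi_neq0. Qed.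

Lemma expiMn t n : expi t ^+ n = expi (t *+ n).
Proof.
elim: n => [|n IH]; first by rewrite expr0 mulr0n expi0.
by rewrite exprS IH mulrS expiD.
Qed.

Lemma expiD2pi t : expi (t + pi *+ 2) = expi t.
Proof. by rewrite /expi cosD2pi sinD2pi. Qed.

Lemma expi_sum (I : Type) (s : seq I) (P : pred I) (f : I -> R) :
  expi (\sum_(i <- s | P i) f i) = \prod_(i <- s | P i) expi (f i).
Proof. exact: (big_morph expi expiD expi0). Qed.

Lemma normc_gt0 {z} : z != 0 -> 0 < normc z.
Proof.
move=> z0; rewrite lt_def; apply/andP; split.
  by apply: contra z0 => /eqP/Normc.eq0_normc->.
by case: z {z0} => a b; apply: sqrtr_ge0.
Qed.

Lemma normc_ge_Re z : `|Re z| <= normc z.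
Proof. by case: z => a b /=; rewrite -sqrtr_sqr ler_wsqrtr // lerDl sqr_ge0. Qed.

Lemma normc_gt_Re z : Im z != 0 -> `|Re z| < normc z.
Proof.
case: z => a b /= b0; rewrite -sqrtr_sqr ltr_sqrt ?ltrDl ?exprn_even_gt0 //.
by rewrite ltr_wpDl ?sqr_ge0 ?exprn_even_gt0.
Qed.

Lemma Re_div_normc_le1 z : `|Re z / normc z| <= 1.
Proof.
have [->|z0] := eqVneq z 0; first by rewrite mul0r normr0 ler01.
have r0 := normc_gt0 z0.
by rewrite normrM normfV (gtr0_norm r0) ler_pdivrMr // mul1r normc_ge_Re.
Qed.

Lemma Re_div_normc_lt1 z : Im z != 0 -> `|Re z / normc z| < 1.
Proof.
move=> Im0; have r0 : 0 < normc z by apply: normc_gt0; apply: contra Im0 => /eqP->.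
by rewrite normrM normfV (gtr0_norm r0) ltr_pdivrMr // mul1r normc_gt_Re.
Qed.

Lemma sqrt_1_sub_Re_div_normc z : z != 0 ->
  Num.sqrt (1 - (Re z / normc z) ^+ 2) = `|Im z| / normc z.
Proof.
move=> z0; have r0 := normc_gt0 z0.
have r2 : normc z ^+ 2 = Re z ^+ 2 + Im z ^+ 2.
  by case: z {z0 r0} => a b /=; rewrite sqr_sqrtr // addr_ge0 ?sqr_ge0.
have -> : 1 - (Re z / normc z) ^+ 2 = (Im z / normc z) ^+ 2.
  have r2_neq0 : normc z ^+ 2 != 0 by rewrite expf_neq0 // gt_eqF.
  by rewrite !expr_div_n -[X in X - _](divff r2_neq0) -mulrBl {1}r2 addrAC subrr add0r.
by rewrite sqrtr_sqr normrM normfV (gtr0_norm r0).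
Qed.

Definition arg z : R :=
  let c := acos (Re z / normc z) in if 0 <= Im z then c else - c.

Lemma arg1 : arg 1 = 0.
Proof. by rewrite /arg Normc.normc1 /= lexx divr1 acos1. Qed.

Lemma arg_itv z : - pi < arg z <= pi.
Proof.
have := Re_div_normc_le1 z; rewrite ler_norml => x1.
have pi0 := @pi_gt0 R; rewrite /arg; case: ifP => [_|/negbT].
  by have := acos_ge0 x1; have := acos_lepi x1; lra.
rewrite -ltNge => /ltr0_neq0/Re_div_normc_lt1; rewrite ltr_norml => /andP[x_gt _].
have x1' : -1 < Re z / normc z <= 1 by case/andP: x1 => _ ->; rewrite x_gt.
by have := acos_ge0 x1; have := acos_ltpi x1'; lra.
Qed.

Lemma polar z : z = (normc z)%:C * expi (arg z).
Proof.
have [->|z0] := eqVneq z 0; first by rewrite Normc.normc0 mul0r.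
have r0 := normc_gt0 z0.
have x1 := Re_div_normc_le1 z; rewrite ler_norml in x1.
apply/eqP; rewrite eq_complex Re_rM Im_rM /= /arg; apply/andP; split; apply/eqP.
  by case: ifP => _; rewrite ?cosN acosK // mulrC divfK ?gt_eqF.
case: ifP => [Im0|/negbT]; rewrite ?sinN sin_acos // sqrt_1_sub_Re_div_normc //.
  by rewrite mulrC divfK ?gt_eqF // ger0_norm.
by rewrite -ltNge => Im0; rewrite mulrN mulrC divfK ?gt_eqF // ltr0_norm // opprK.
Qed.

Lemma polar_ratio (u v : R[i]) : u != 0 ->
  v = u * ((normc v / normc u)%:C * expi (arg v - arg u)).
Proof.
move=> u0; have nu0 : (normc u)%:C != 0 :> R[i] by rewrite fmorph_eq0 gt_eqF ?normc_gt0.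
rewrite {1}(polar v) {1}(polar u) expiB rmorphM fmorphV.
by field; rewrite nu0 expi_neq0.
Qed.

Lemma cos_lt0_pihalf (x : R) : pi / 2 < x < pi + pi / 2 -> cos x < 0.
Proof.
move=> x_itv; rewrite -(subrK pi x) cosDpi oppr_lt0.
by apply: cos_gt0_pihalf; lra.
Qed.

Lemma cos_ge0_itv (x : R) : - pi < x <= pi -> 0 <= cos x -> - (pi / 2) <= x <= pi / 2.
Proof.
move=> x_itv cos_ge0; have pi_gt0 := @pi_gt0 R.
apply/andP; split; rewrite leNgt; apply/negP => x_out.
  by have := @cos_lt0_pihalf (- x); rewrite cosN; lra.
by have := @cos_lt0_pihalf x; lra.
Qed.

(* Take the first partial sum that passes pi / 2: the previous one did not,
   and the last step is shorter than pi. *)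
Lemma cos_partial_sum_lt0 {psi : R} {d : nat -> R} {p : nat} :
  - (pi / 2) <= psi <= pi / 2 -> (forall j, (1 <= j <= p)%N -> 0 < d j < pi) ->
  pi < \sum_(1 <= j < p.+1) d j ->
  exists2 k, (k <= p)%N & cos (psi + \sum_(1 <= j < k.+1) d j) < 0.
Proof.
move=> psi_itv d_itv sum_gt.
pose P k := (pi / 2 < psi + \sum_(1 <= j < k.+1) d j) && (k <= p)%N.
have exP : exists k, P k by exists p; rewrite /P leqnn andbT; lra.
case: (ex_minnP exP) => k /andP[cross kp] kmin.
case: k cross kp kmin => [|k] cross kp kmin; first by rewrite big_geq // in cross; lra.
have prev : psi + \sum_(1 <= j < k.+1) d j <= pi / 2.
  rewrite leNgt; apply/negP => crossk.
  by have := kmin k; rewrite /P crossk ltnW // ltnn => /(_ isT).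
exists k.+1 => //; apply: cos_lt0_pihalf; move: cross.
by rewrite big_nat_recr //=; have := d_itv k.+1; rewrite kp => /(_ isT); lra.
Qed.

Lemma pi_div_natr_gt0 {n} : (0 < n)%N -> 0 < pi / n%:R :> R.
Proof. by move=> n0; rewrite divr_gt0 ?pi_gt0 ?ltr0n. Qed.

Lemma pi_div_natr_double_le {n} : (1 < n)%N -> pi / n%:R *+ 2 <= pi :> R.
Proof.
move=> n_gt1; have n_gt0 : 0 < n%:R :> R by rewrite ltr0n ltnW.
have qn : pi / n%:R * n%:R = pi :> R by rewrite divfK ?lt0r_neq0.
have n2 : 2 <= n%:R :> R by rewrite ler_nat.
have := pi_div_natr_gt0 (ltnW n_gt1); nra.
Qed.

Lemma sum_powers_eq0_neg {x : nat -> R} {m n : nat} : (0 < m)%N ->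
  (forall i, (i < m)%N -> x i != 0) -> \sum_(i < m) x i ^+ n = 0 ->
  exists2 i, (i < m)%N & x i < 0.
Proof.
move=> m0 x_neq0 sum0; apply: contrapT => no_neg.
suff : 0 < \sum_(i < m) x i ^+ n by rewrite sum0 ltxx.
apply: sumr_ord_gt0 => // i; apply: exprn_gt0.
rewrite lt_neqAle eq_sym x_neq0 //= leNgt; apply/negP => xi; apply: no_neg; exists i => //.
Qed.

Lemma sum_powers_eq0_pos {x : nat -> R} {m n : nat} : (0 < m)%N ->
  (forall i, (i < m)%N -> x i != 0) -> \sum_(i < m) x i ^+ n = 0 ->
  exists2 i, (i < m)%N & 0 < x i.
Proof.
move=> m0 x_neq0 sum0.
have Nx_neq0 i : (i < m)%N -> - x i != 0 by move=> im; rewrite oppr_eq0 x_neq0.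
have sumN0 : \sum_(i < m) (- x i) ^+ n = 0.
  by under eq_bigr do rewrite exprNn; rewrite -mulr_sumr sum0 mulr0.
by have [i im] := sum_powers_eq0_neg m0 Nx_neq0 sumN0; rewrite oppr_lt0; exists i.
Qed.

(* Rotating by [- c] with [c] the midpoint of the arguments puts every term in
   the open right half-plane. *)
Lemma sum_powers_sector_neq0 {r th : nat -> R} {m n : nat} :
  (0 < m)%N -> (0 < n)%N -> (forall i, (i < m)%N -> 0 < r i) ->
  (forall i j, (i < m)%N -> (j < m)%N -> th j - th i < pi / n%:R) ->
  \sum_(i < m) ((r i)%:C * expi (th i)) ^+ n != 0.
Proof.
case: m => // m _ n0 r_gt0 th_close.
have [imax _ le_max] := @arg_maxP _ _ _ ord0 predT (fun i : 'I_m.+1 => th i) isT.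
have [imin _ ge_min] := @arg_minP _ _ _ ord0 predT (fun i : 'I_m.+1 => th i) isT.
set c := (th imax + th imin) / 2.
have n_gt0 : 0 < n%:R :> R by rewrite ltr0n.
have qn : pi / n%:R * n%:R = pi :> R by rewrite divfK ?gt_eqF.
have rot : expi (- (c *+ n)) * \sum_(i < m.+1) ((r i)%:C * expi (th i)) ^+ n
    = \sum_(i < m.+1) (r i ^+ n)%:C * expi ((th i - c) *+ n).
  rewrite mulr_sumr; apply: eq_bigr => i _.
  by rewrite exprMn -rmorphXn expiMn mulrCA -expiD mulrnBl addrC.
have : 0 < Re (\sum_(i < m.+1) (r i ^+ n)%:C * expi ((th i - c) *+ n)).
  rewrite Re_sum; apply: sumr_ord_gt0 => // i.
  have i_max : th i <= th imax := le_max i isT.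
  have i_min : th imin <= th i := ge_min i isT.
  have close := th_close _ _ (ltn_ord imin) (ltn_ord imax).
  rewrite Re_rM mulr_gt0 ?exprn_gt0 ?r_gt0 //; apply: cos_gt0_pihalf.
  by rewrite -[_ *+ n]mulr_natr /c; apply/andP; split; nra.
by apply: contraTneq => sum0; rewrite -rot sum0 mulr0 /= ltxx.
Qed.

Lemma args_in_narrow_arc {q : R} {th : nat -> R} {m w : nat} :
  0 < q -> q *+ 2 <= pi -> th 0%N = 0 -> (forall i, (i < m)%N -> - pi < th i <= pi) ->
  (w < m)%N -> sin (th w) != 0 ->
  (forall a b, (a < m)%N -> (b < m)%N ->
     ~~ (q <= th b - th a < pi) && ~~ (q <= th b - th a + pi *+ 2 < pi)) ->
  forall a b, (a < m)%N -> (b < m)%N -> th b - th a < q.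
Proof.
move=> q0 q2 th0 th_itv wm sin_thw no_gap.
have [thw0 thwpi] : th w <> 0 /\ th w <> pi.
  by split=> thw; move: sin_thw; rewrite thw ?sin0 ?sinpi eqxx.
have m0 : (0 < m)%N by apply: leq_ltn_trans wm.
have near0 i : (i < m)%N -> - q < th i < q \/ th i = pi.
  move=> im; have := no_gap 0%N i m0 im; have := no_gap i 0%N im m0.
  by have := th_itv i im; rewrite th0; lra.
have not_pi i : (i < m)%N -> th i <> pi.
  move=> im thi; have := no_gap w i wm im; have := no_gap i w im wm.
  by have := near0 w wm; rewrite thi; lra.
move=> a b am bm; have := no_gap a b am bm; have := not_pi a am; have := not_pi b bm.
by have := near0 a am; have := near0 b bm; lra.
Qed.

(* Were there no such pair, the arguments of the [be i / be 0] would lie in an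
   arc shorter than [pi / n], which [sum_powers_sector_neq0] forbids. *)
Lemma level_rotation {be : nat -> R[i]} {m n : nat} : (1 < n)%N ->
  (forall i, (i < m)%N -> be i != 0) -> \sum_(i < m) be i ^+ n = 0 ->
  (exists2 w, (w < m)%N & Im (be w / be 0%N) != 0) ->
  exists a b s d, [/\ (a < m)%N, (b < m)%N, 0 < s, pi / n%:R <= d < pi
                    & be b = be a * (s%:C * expi d)].
Proof.
move=> n_gt1 be_neq0 sum0 [w wm Imw].
have m0 : (0 < m)%N by apply: leq_ltn_trans wm.
pose ga i := be i / be 0%N; pose th i := arg (ga i).
have ga_neq0 i : (i < m)%N -> ga i != 0 by move=> im; rewrite mulf_neq0 ?invr_eq0 ?be_neq0.
have th0 : th 0%N = 0 by rewrite /th /ga divff ?arg1 ?be_neq0.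
have sin_thw : sin (th w) != 0.
  have Imga : Im (ga w) != 0 := Imw.
  by move: Imga; rewrite {1}(polar (ga w)) Im_rM mulf_eq0 negb_or => /andP[].
apply: contrapT => no_pair.
have no_gap a b : (a < m)%N -> (b < m)%N -> ~~ (pi / n%:R <= th b - th a < pi)
    && ~~ (pi / n%:R <= th b - th a + pi *+ 2 < pi).
  move=> am bm; pose s := normc (ga b) / normc (ga a).
  have be_ab : be b = be a * (s%:C * expi (th b - th a)).
    have be_ga i : be i = ga i * be 0%N by rewrite divfK ?be_neq0.
    rewrite (be_ga b) (be_ga a) {1}(@polar_ratio (ga a) (ga b) (ga_neq0 a am)).
    by rewrite mulrAC -mulrA.
  have s_gt0 : 0 < s by rewrite divr_gt0 ?normc_gt0 ?ga_neq0.
  apply/andP; split; apply/negP => d_in; apply: no_pair.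
    by exists a, b, s, (th b - th a).
  by exists a, b, s, (th b - th a + pi *+ 2); rewrite expiD2pi.
have th_itv i : (i < m)%N -> - pi < th i <= pi by move=> _; apply: arg_itv.
have narrow := args_in_narrow_arc (pi_div_natr_gt0 (ltnW n_gt1))
  (pi_div_natr_double_le n_gt1) th0 th_itv wm sin_thw no_gap.
have r_gt0 i : (i < m)%N -> 0 < normc (ga i) by move=> im; apply/normc_gt0/ga_neq0.
have := sum_powers_sector_neq0 m0 (ltnW n_gt1) r_gt0 narrow.
under eq_bigr do rewrite -polar exprMn.
by rewrite -mulr_suml sum0 mul0r eqxx.
Qed.

(* If all the ratios [be i / be 0] are real then so is
   [be 0 = (\sum_i be i / be 0)^-1], hence so is every [be i]. *)
Lemma level_nonreal_ratio {be : nat -> R[i]} {m : nat} :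
  (forall i, (i < m)%N -> be i != 0) -> \sum_(i < m) be i = 1 ->
  (exists2 i, (i < m)%N & Im (be i) != 0) ->
  exists2 w, (w < m)%N & Im (be w / be 0%N) != 0.
Proof.
move=> be_neq0 sum1 [i im Imi]; apply: contrapT => all_real.
have be0_neq0 : be 0%N != 0 by apply: be_neq0; apply: leq_ltn_trans im.
pose t j := Re (be j / be 0%N).
have be_t j : (j < m)%N -> be j = be 0%N * (t j)%:C.
  move=> jm; rewrite -real_Im0; first by rewrite mulrC divfK.
  by have [//|Imj] := eqVneq (Im (be j / be 0%N)) 0; case: all_real; exists j.
have sum_t : be 0%N * (\sum_(j < m) t j)%:C = 1.
  by rewrite -sum1 rmorph_sum mulr_sumr; apply: eq_bigr => j _; rewrite -be_t.
have Im_be0 : Im (be 0%N) = 0.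
  have st_neq0 : (\sum_(j < m) t j)%:C != 0 :> R[i].
    by apply: contra_eq_neq sum_t => ->; rewrite mulr0 eq_sym oner_neq0.
  by rewrite -[be 0%N](mulfK st_neq0) sum_t mul1r -fmorphV.
by move: Imi; rewrite be_t // mulrC ImM Im_be0 /= mul0r mulr0 addr0 eqxx.
Qed.

Section Coefficients.
Variables (m : nat -> nat) (al : nat -> nat -> R[i]) (p : nat).
Hypothesis al_neq0 : forall j, (1 <= j <= p)%N -> forall i, (i < m j)%N -> al j i != 0.
Hypothesis sum_al : forall j, (1 <= j <= p)%N -> \sum_(i < m j) al j i = 1.

Definition coeff_index (idx : nat -> nat) := forall j, (1 <= j <= p)%N -> (idx j < m j)%N.

Definition coeff (idx : nat -> nat) := \prod_(1 <= j < p.+1) al j (idx j).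

Definition upd (idx : nat -> nat) (k v : nat) := fun j => if j == k then v else idx j.

Lemma m_gt0 j : (1 <= j <= p)%N -> (0 < m j)%N.
Proof.
move=> jp; have := sum_al j jp; case: (m j) => // /eqP.
by rewrite big_ord0 eq_sym oner_eq0.
Qed.

Lemma coeff_neq0 {idx} : coeff_index idx -> coeff idx != 0.
Proof.
move=> idx_ok; rewrite /coeff prodf_seq_neq0; apply/allP => j.
by rewrite mem_index_iota ltnS => jp; apply: al_neq0 _ (idx_ok j jp).
Qed.

Lemma coeff_index_upd idx k v :
  coeff_index idx -> (v < m k)%N -> coeff_index (upd idx k v).
Proof. by move=> idx_ok vm j jp; rewrite /upd; case: eqP => [->//|_]; apply: idx_ok. Qed.

Lemma coeff_upd idx k v : coeff_index idx -> (1 <= k <= p)%N ->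
  coeff (upd idx k v) = coeff idx * (al k v / al k (idx k)).
Proof.
move=> idx_ok kp; have k_in : k \in index_iota 1 p.+1 by rewrite mem_index_iota ltnS.
rewrite /coeff !(bigD1_seq k k_in (iota_uniq _ _)) /= /upd eqxx.
under eq_bigr => j /negbTE-> do [].
by field; apply: al_neq0 _ (idx_ok k kp).
Qed.

Lemma exists_coeff_Re_neq0 : exists2 idx, coeff_index idx & Re (coeff idx) != 0.
Proof.
pose idx0 (j : nat) := 0%N.
have idx0_ok : coeff_index idx0 by move=> j /m_gt0.
have [Re0|] := eqVneq (Re (coeff idx0)) 0; last by exists idx0.
have Im_neq0 : Im (coeff idx0) != 0.
  by apply: contraNneq (coeff_neq0 idx0_ok) => Im0; rewrite (real_Im0 Im0) Re0.
have [[j jp [i im Imi]]|all_real] :=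
  pselect (exists2 j, (1 <= j <= p)%N & exists2 i, (i < m j)%N & Im (al j i) != 0).
  have [w wm Imw] :=
    level_nonreal_ratio (al_neq0 j jp) (sum_al j jp) (ex_intro2 _ _ i im Imi).
  exists (upd idx0 j w); first exact: coeff_index_upd.
  by rewrite coeff_upd // ReM Re0 mul0r sub0r oppr_eq0 mulf_neq0.
move: Im_neq0; rewrite Im_prod_real ?eqxx // => j; rewrite mem_index_iota ltnS => jp.
have [//|Im_neq0] := eqVneq (Im (al j 0%N)) 0.
by case: all_real; exists j => //; exists 0%N => //; apply: m_gt0.
Qed.

Lemma neg_coeff_of_real_level k n : (1 <= k <= p)%N ->
  (forall i, (i < m k)%N -> Im (al k i) = 0) -> \sum_(i < m k) al k i ^+ n = 0 ->
  exists2 idx, coeff_index idx & Re (coeff idx) < 0.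
Proof.
move=> kp real_k sum0; pose x i := Re (al k i).
have al_x i : (i < m k)%N -> al k i = (x i)%:C by move=> im; apply/real_Im0/real_k.
have x_neq0 i : (i < m k)%N -> x i != 0.
  by move=> im; apply: contraNneq (al_neq0 k kp i im) => x0; rewrite al_x // x0.
have sum_x0 : \sum_(i < m k) x i ^+ n = 0.
  suff : (\sum_(i < m k) x i ^+ n)%:C = 0 :> R[i] by case.
  rewrite rmorph_sum -[RHS]sum0; apply: eq_bigr => i _.
  by rewrite (al_x i (ltn_ord i)) rmorphXn.
have [ps psm x_ps] := sum_powers_eq0_pos (m_gt0 k kp) x_neq0 sum_x0.
have [ng ngm x_ng] := sum_powers_eq0_neg (m_gt0 k kp) x_neq0 sum_x0.
have [idx idx_ok Re_neq0] := exists_coeff_Re_neq0.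
have x_idx := x_neq0 _ (idx_ok k kp).
have Re_upd v : (v < m k)%N ->
    Re (coeff (upd idx k v)) = Re (coeff idx) * (x v / x (idx k)).
  move=> vm; rewrite coeff_upd // al_x // al_x ?idx_ok // -fmorph_div.
  by rewrite mulrC Re_rM mulrC.
have opp_signs : (x ps / x (idx k)) * (x ng / x (idx k)) < 0.
  have inv2_gt0 : 0 < (x (idx k))^-1 * (x (idx k))^-1.
    by rewrite -expr2 exprn_even_gt0 // invr_eq0.
  by rewrite mulrACA pmulr_llt0 // pmulr_rlt0.
have c2_gt0 : 0 < Re (coeff idx) ^+ 2 by rewrite exprn_even_gt0.
have [ps_neg|ps_ge0] := ltP (Re (coeff idx) * (x ps / x (idx k))) 0.
  by exists (upd idx k ps); [apply: coeff_index_upd | rewrite Re_upd].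
exists (upd idx k ng); [exact: coeff_index_upd | rewrite Re_upd //; nra].
Qed.

Lemma coeff_switch_prefix {a b : nat -> nat} {s d : nat -> R} {k : nat} :
  (forall j, (1 <= j <= p)%N -> al j (b j) = al j (a j) * ((s j)%:C * expi (d j))) ->
  (k <= p)%N ->
  coeff (fun j => if (j <= k)%N then b j else a j)
  = coeff a * ((\prod_(1 <= j < k.+1) s j)%:C * expi (\sum_(1 <= j < k.+1) d j)).
Proof.
move=> ab kp; rewrite /coeff [LHS](big_cat_nat (n := k.+1)) ?ltnS //.
rewrite [in RHS](big_cat_nat (n := k.+1)) ?ltnS //=.
have -> : \prod_(1 <= j < k.+1) al j (if (j <= k)%N then b j else a j)
    = \prod_(1 <= j < k.+1) (al j (a j) * ((s j)%:C * expi (d j))).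
  apply: eq_big_nat => j /andP[j1 jk]; rewrite ltnS in jk.
  by rewrite jk ab // j1 (leq_trans jk).
have -> : \prod_(k.+1 <= j < p.+1) al j (if (j <= k)%N then b j else a j)
    = \prod_(k.+1 <= j < p.+1) al j (a j).
  by apply: eq_big_nat => j /andP[kj _]; rewrite leqNgt kj.
by rewrite !big_split /= -rmorph_prod -expi_sum mulrAC.
Qed.

Lemma neg_coeff_of_rotation_pairs (a b : nat -> nat) (s d : nat -> R) :
  coeff_index a -> coeff_index b ->
  (forall j, (1 <= j <= p)%N ->
     [/\ 0 < s j, 0 < d j < pi & al j (b j) = al j (a j) * ((s j)%:C * expi (d j))]) ->
  pi < \sum_(1 <= j < p.+1) d j ->
  exists2 idx, coeff_index idx & Re (coeff idx) < 0.
Proof.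
move=> a_ok b_ok rot sum_d.
have [Re_neg|Re_ge0] := ltP (Re (coeff a)) 0; first by exists a.
have ab j : (1 <= j <= p)%N -> al j (b j) = al j (a j) * ((s j)%:C * expi (d j)).
  by move=> /rot[].
have d_itv j : (1 <= j <= p)%N -> 0 < d j < pi by move=> /rot[].
have r_gt0 : 0 < normc (coeff a) := normc_gt0 (coeff_neq0 a_ok).
have psi_itv : - (pi / 2) <= arg (coeff a) <= pi / 2.
  apply: cos_ge0_itv (arg_itv _) _.
  by move: Re_ge0; rewrite {1}(polar (coeff a)) Re_rM pmulr_rge0.
have [k kp cos_lt0] := cos_partial_sum_lt0 psi_itv d_itv sum_d.
exists (fun j => if (j <= k)%N then b j else a j).
  by move=> j jp; case: ifP => _; [apply: b_ok | apply: a_ok].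
rewrite (coeff_switch_prefix ab kp) {1}(polar (coeff a)) mulrACA -rmorphM -expiD Re_rM /=.
rewrite pmulr_rlt0 // mulr_gt0 // big_seq prodr_gt0 // => j.
rewrite mem_index_iota => /andP[j1 jk].
by have [] := rot j; rewrite // j1 (leq_trans _ kp).
Qed.

Lemma neg_coeff_of_rotations (lb : nat -> R) :
  (forall j, (1 <= j <= p)%N -> exists a b s d,
     [/\ (a < m j)%N, (b < m j)%N, 0 < s, lb j <= d < pi
       & al j b = al j a * (s%:C * expi d)]) ->
  (forall j, (1 <= j <= p)%N -> 0 < lb j) -> pi < \sum_(1 <= j < p.+1) lb j ->
  exists2 idx, coeff_index idx & Re (coeff idx) < 0.
Proof.
move=> rot lb_gt0 sum_lb.
have /choice[f f_ok] : forall j, exists x : nat * nat * R * R, (1 <= j <= p)%N ->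
  [/\ (x.1.1.1 < m j)%N, (x.1.1.2 < m j)%N, 0 < x.1.2, lb j <= x.2 < pi
    & al j x.1.1.2 = al j x.1.1.1 * (x.1.2%:C * expi x.2)].
  move=> j; have [jp|_] := boolP (1 <= j <= p)%N; last by exists (0%N, 0%N, 0, 0).
  by have [a [b [s [d ?]]]] := rot j jp; exists (a, b, s, d).
apply: (@neg_coeff_of_rotation_pairs (fun j => (f j).1.1.1) (fun j => (f j).1.1.2)
  (fun j => (f j).1.2) (fun j => (f j).2)).
- by move=> j /f_ok[].
- by move=> j /f_ok[].
- move=> j jp; have [_ _ s_gt0 /andP[lb_d d_lt] ab] := f_ok j jp.
  by split=> //; rewrite d_lt andbT (lt_le_trans (lb_gt0 j jp) lb_d).
- by apply: (lt_le_trans sum_lb); apply: ler_sum_nat => j /f_ok[_ _ _ /andP[]].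
Qed.

Lemma neg_coeff_exists (n : nat -> nat) :
  (forall j, (1 <= j <= p)%N -> (1 < n j)%N) ->
  (forall j, (1 <= j <= p)%N -> \sum_(i < m j) al j i ^+ n j = 0) ->
  1 < \sum_(1 <= j < p.+1) (n j)%:R^-1 :> R ->
  exists c, is_coeff m al p c /\ 'Re c < 0.
Proof.
move=> n_gt1 sum_alX harm.
suff [idx idx_ok Re_neg] : exists2 idx, coeff_index idx & Re (coeff idx) < 0.
  by exists (coeff idx); split; [exists idx | rewrite -complexRe ltcR].
have [[k kp real_k]|nonreal] :=
  pselect (exists2 k, (1 <= k <= p)%N & forall i, (i < m k)%N -> Im (al k i) = 0).
  exact: neg_coeff_of_real_level kp real_k (sum_alX k kp).
apply: (@neg_coeff_of_rotations (fun j => pi / (n j)%:R)) => [j jp|j jp|].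
- apply: level_rotation (n_gt1 j jp) (al_neq0 j jp) (sum_alX j jp) _.
  apply: level_nonreal_ratio (al_neq0 j jp) (sum_al j jp) _.
  apply: contrapT => all_real; apply: nonreal; exists j => // i im.
  by have [//|Imi] := eqVneq (Im (al j i)) 0; case: all_real; exists i.
- by apply/pi_div_natr_gt0/ltnW/n_gt1.
- by rewrite -mulr_sumr ltr_pMr ?pi_gt0.
Qed.

End Coefficients.
End NegativeCoefficients.

Theorem theorem2p3 (R : realType) :
  (forall (p : nat) (m : nat -> nat) (alpha : nat -> nat -> R[i]),
      (3 <= p)%N ->
      (forall q, (1 <= q <= p)%N -> famI_cond m alpha q) ->
      exists c, is_coeff m alpha p c /\ 'Re c < 0)
  /\
  (forall (p : nat) (m : nat -> nat) (alpha : nat -> nat -> R[i]),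
      (7 <= p)%N ->
      (forall q, (1 <= q <= p)%N -> famII_cond m alpha q) ->
      exists c, is_coeff m alpha p c /\ 'Re c < 0).
Proof.
split=> [p m al p3 famI | p m al p7 famII].
  apply: (@neg_coeff_exists R m al p _ _ (fun j => j.+1)).
  - by move=> j /famI[].
  - by move=> j /famI[].
  - by move=> j /andP[].
  - by move=> j /famI[].
  apply: (@harmonic_gt1_mono _ _ 3 p p3).
  by do 3 rewrite big_ltn //; rewrite big_geq //; lra.
apply: (@neg_coeff_exists R m al p _ _ (fun j => (2 * j).+1)).
- by move=> j /famII[].
- by move=> j /famII[].
- by move=> j /andP[j1 _]; rewrite ltnS muln_gt0.
- by move=> j /famII[].
apply: (@harmonic_gt1_mono _ _ 7 p p7).
by do 7 rewrite big_ltn //; rewrite big_geq // !mul2n !doubleS double0; lra.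
Qed.
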